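(* If a closure model $\mathcal{M}=((X,\mathcal{C}_R),\mathcal{V})$ is quasi-discrete, finitely closed and finitely backward closed, then for all $x_1,x_2\in X$: $x_1\simeq x_2$ iff $x_1\equiv_{SLCS}x_2$.
   Context: Quasi-discrete closure model: $\mathcal{C}_R(A)=A\cup\{x\mid\exists a\in A.\ aRx\}$, $\vec{\mathcal{C}}(x)=\mathcal{C}_R(\{x\})$, $\overleftarrow{\mathcal{C}}(x)=\mathcal{C}_{R^{-1}}(\{x\})$, $\mathcal{V}:AP\to\mathcal{P}(X)$, $\mathcal{V}^{-1}(x)=\{p\mid x\in\mathcal{V}(p)\}$; finitely (backward) closed: every $\vec{\mathcal{C}}(x)$ (resp. $\overleftarrow{\mathcal{C}}(x)$) is finite. Path: $\pi:\mathbb{N}\to X$ with $\pi[\mathcal{C}_{succ}(N)]\subseteq\mathcal{C}_R(\pi[N])$ for all $N\subseteq\mathbb{N}$, $\mathcal{C}_{succ}$ the closure based on $n\mapsto n+1$. SLCS: $\Phi::=p\mid\neg\Phi\mid\Phi\lor\Phi\mid\vec\rho\,\Phi_1[\Phi_2]\mid\overleftarrow\rho\,\Phi_1[\Phi_2]$; $x\models\vec\rho\,\Phi_1[\Phi_2]$ iff some path $\pi$ and $\ell$ have $\pi(0)=x$, $\pi(\ell)\models\Phi_1$, $\pi(j)\models\Phi_2$ for $0<j<\ell$; $x\models\overleftarrow\rho\,\Phi_1[\Phi_2]$ iff some path $\pi$ and $\ell$ have $\pi(\ell)=x$, $\pi(0)\models\Phi_1$, $\pi(j)\models\Phi_2$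 for $0<j<\ell$. $\equiv_{SLCS}$: same SLCS formulas. $\simeq$: union of all non-empty equivalence relations $B$ with $(x_1,x_2)\in B\Rightarrow\mathcal{V}^{-1}(x_1)=\mathcal{V}^{-1}(x_2)$ and for all $C\in X/B$, $\vec{\mathcal{C}}(x_1)\cap C\neq\emptyset\iff\vec{\mathcal{C}}(x_2)\cap C\neq\emptyset$ and $\overleftarrow{\mathcal{C}}(x_1)\cap C\neq\emptyset\iff\overleftarrow{\mathcal{C}}(x_2)\cap C\neq\emptyset$. *)

From Stdlib Require Import List Arith.
Set Implicit Arguments.

Section QDCM.
Variables (X AP : Type) (R : X -> X -> Prop) (V : AP -> X -> Prop).

Definition closureR (Rel : X -> X -> Prop) (A : X -> Prop) : X -> Prop :=
  fun x => A x \/ exists a, A a /\ Rel a x.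

Definition conv (Rel : X -> X -> Prop) : X -> X -> Prop := fun x y => Rel y x.

Definition fwdC (x : X) : X -> Prop := closureR R (fun y => y = x).
Definition bwdC (x : X) : X -> Prop := closureR (conv R) (fun y => y = x).

Definition finite_set (A : X -> Prop) : Prop :=
  exists l : list X, forall y, A y -> In y l.

Definition finitely_closed : Prop := forall x, finite_set (fwdC x).
Definition finitely_backward_closed : Prop := forall x, finite_set (bwdC x).

Definition Vinv (x : X) : AP -> Prop := fun p => V p x.

Definition Csucc (N : nat -> Prop) : nat -> Prop :=
  fun m => N m \/ exists n, N n /\ S n = m.

Definition image (pi : nat -> X) (N : nat -> Prop) : X -> Prop :=
  fun y => exists n, N n /\ pi n = y.

Definition is_path (pi : nat -> X) : Prop :=
  forall N : nat -> Prop, forall y, image pi (Csucc N) y -> closureR R (image pi N) y.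

End QDCM.

Inductive slcs (AP : Type) : Type :=
| Atom : AP -> slcs AP
| Neg : slcs AP -> slcs AP
| Or : slcs AP -> slcs AP -> slcs AP
| RhoF : slcs AP -> slcs AP -> slcs AP
| RhoB : slcs AP -> slcs AP -> slcs AP.

Fixpoint sat (X AP : Type) (R : X -> X -> Prop) (V : AP -> X -> Prop)
  (phi : slcs AP) (x : X) : Prop :=
  match phi with
  | Atom p => V p x
  | Neg f => ~ sat R V f x
  | Or f g => sat R V f x \/ sat R V g x
  | RhoF f1 f2 => exists (pi : nat -> X) (l : nat),
      is_path R pi /\ pi 0 = x /\ sat R V f1 (pi l) /\
      (forall j, 0 < j -> j < l -> sat R V f2 (pi j))
  | RhoB f1 f2 => exists (pi : nat -> X) (l : nat),
      is_path R pi /\ pi l = x /\ sat R V f1 (pi 0) /\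
      (forall j, 0 < j -> j < l -> sat R V f2 (pi j))
  end.

Definition slcs_equiv (X AP : Type) (R : X -> X -> Prop) (V : AP -> X -> Prop)
  (x1 x2 : X) : Prop :=
  forall phi : slcs AP, sat R V phi x1 <-> sat R V phi x2.

Definition equivalence_rel (X : Type) (B : X -> X -> Prop) : Prop :=
  (forall x, B x x) /\ (forall x y, B x y -> B y x) /\
  (forall x y z, B x y -> B y z -> B x z).

Definition is_class (X : Type) (B : X -> X -> Prop) (C : X -> Prop) : Prop :=
  exists z, forall y, C y <-> B z y.

Definition CMC_bisim_rel (X AP : Type) (R : X -> X -> Prop) (V : AP -> X -> Prop)
  (B : X -> X -> Prop) : Prop :=
  equivalence_rel B /\ (exists a b, B a b) /\
  forall x1 x2, B x1 x2 ->
    (forall p, Vinv V x1 p <-> Vinv V x2 p) /\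
    forall C : X -> Prop, is_class B C ->
      ((exists y, fwdC R x1 y /\ C y) <-> (exists y, fwdC R x2 y /\ C y)) /\
      ((exists y, bwdC R x1 y /\ C y) <-> (exists y, bwdC R x2 y /\ C y)).

Definition cmc_bisimilar (X AP : Type) (R : X -> X -> Prop) (V : AP -> X -> Prop)
  (x1 x2 : X) : Prop :=
  exists B, CMC_bisim_rel R V B /\ B x1 x2.

From Stdlib Require Import List Arith Lia Classical.

(* Paths only matter through their finite prefixes, which are chains of
   one-step closures y ∈ C(x); so both reachability operators are read off
   finite chains.
   - Soundness: a CMC-bisimulation B lets every one-step closure move be
     matched (forth along C, back along the backward closure); lifting chains
     step by step, from their start for ρ→ and from their end for ρ←, shows by
     induction on formulas that B-related points satisfy the same formulas.
   - Completeness: SLCS-equivalence is itself a CMC-bisimulation.  The formulas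
     ρ→φ[⊥] and ρ←φ[⊥] are "one-step diamonds" over the forward and backward
     closures; since these closures are finite, a finite conjunction separates
     a point from all non-equivalent neighbours, so equivalent points have
     equivalent neighbours, which is the class condition of a bisimulation. *)

Section Chains.
Variables (X : Type) (Step : X -> X -> Prop).

Definition chain (pi : nat -> X) (l : nat) : Prop :=
  forall n, n < l -> Step (pi n) (pi (S n)).

Definition extend (pi : nat -> X) (l : nat) (y : X) : nat -> X :=
  fun j => if j <=? l then pi j else y.

Lemma chain_extend pi l y :
  chain pi l -> Step (pi l) y -> chain (extend pi l y) (S l).
Proof.
  intros Hc Hy n Hn; unfold extend.
  destruct (Nat.leb_spec n l), (Nat.leb_spec (S n) l); try lia.
  - apply Hc; lia.
  - replace n with l by lia; exact Hy.
Qed.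

Lemma lift_chain_from_start (B : X -> X -> Prop) :
  (forall x x' y, B x x' -> Step x y -> exists y', Step x' y' /\ B y y') ->
  forall l pi x', chain pi l -> B (pi 0) x' ->
  exists pi', chain pi' l /\ pi' 0 = x' /\ forall j, j <= l -> B (pi j) (pi' j).
Proof.
  intros zig l; induction l as [|l IH]; intros pi x' Hc H0.
  - exists (fun _ => x'); split; [intros n Hn; lia|split; [reflexivity|]].
    intros j Hj; replace j with 0 by lia; exact H0.
  - destruct (IH pi x') as [pi' [Hc' [E HB]]]; [intros n Hn; apply Hc; lia|exact H0|].
    destruct (zig (pi l) (pi' l) (pi (S l))) as [y' [Hy' By]];
      [apply HB; lia|apply Hc; lia|].
    exists (extend pi' l y'); split; [now apply chain_extend|split; [exact E|]].
    intros j Hj; unfold extend; destruct (Nat.leb_spec j l).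
    + now apply HB.
    + now replace j with (S l) by lia.
Qed.

Lemma lift_chain_from_end (B : X -> X -> Prop) :
  (forall x x' y, B x x' -> Step y x -> exists y', Step y' x' /\ B y y') ->
  forall l pi x', chain pi l -> B (pi l) x' ->
  exists pi', chain pi' l /\ pi' l = x' /\ forall j, j <= l -> B (pi j) (pi' j).
Proof.
  intros zag l; induction l as [|l IH]; intros pi x' Hc Hl.
  - exists (fun _ => x'); split; [intros n Hn; lia|split; [reflexivity|]].
    intros j Hj; replace j with 0 by lia; exact Hl.
  - destruct (zag (pi (S l)) x' (pi l) Hl) as [y' [Hy' By]]; [apply Hc; lia|].
    destruct (IH pi y') as [pi' [Hc' [E HB]]]; [intros n Hn; apply Hc; lia|exact By|].
    exists (extend pi' l x'); split; [apply chain_extend; [exact Hc'|rewrite E; exact Hy']|split].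
    + unfold extend; destruct (Nat.leb_spec (S l) l); [lia|reflexivity].
    + intros j Hj; unfold extend; destruct (Nat.leb_spec j l).
      * now apply HB.
      * now replace j with (S l) by lia.
Qed.

Lemma zig_reaches_same_classes (E : X -> X -> Prop) :
  equivalence_rel E ->
  (forall x1 x2 y1, E x1 x2 -> Step x1 y1 -> exists y2, Step x2 y2 /\ E y1 y2) ->
  forall x1 x2 C, E x1 x2 -> is_class E C ->
  ((exists y, Step x1 y /\ C y) <-> (exists y, Step x2 y /\ C y)).
Proof.
  intros [_ [Esym Etrans]] zig x1 x2 C Ex [z Hz].
  assert (one_way : forall a b, E a b ->
            (exists y, Step a y /\ C y) -> exists y, Step b y /\ C y).
  { intros a b Eab [w [Hw Cw]].
    destruct (zig a b w Eab Hw) as [y [Hy Ewy]].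
    exists y; split; [exact Hy|].
    apply Hz; apply Etrans with w; [apply Hz|]; assumption. }
  split; apply one_way; auto.
Qed.

End Chains.

Arguments chain {X}.
Arguments lift_chain_from_start {X Step B}.
Arguments lift_chain_from_end {X Step B}.
Arguments zig_reaches_same_classes {X Step E}.

Section Model.
Variables (X AP : Type) (R : X -> X -> Prop) (V : AP -> X -> Prop).

Notation sat := (sat R V).
Notation equiv := (slcs_equiv R V).

Lemma fwdC_refl x : fwdC R x x.
Proof. now left. Qed.

Lemma bwdC_refl x : bwdC R x x.
Proof. now left. Qed.

Lemma bwdC_fwdC x y : bwdC R x y <-> fwdC R y x.
Proof.
  unfold bwdC, fwdC, closureR, conv; split.
  - intros [-> | [a [-> Hr]]]; [now left|right; eauto].
  - intros [-> | [a [-> Hr]]]; [now left|right; eauto].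
Qed.

Lemma is_path_steps (pi : nat -> X) :
  is_path R pi <-> forall n, fwdC R (pi n) (pi (S n)).
Proof.
  split.
  - intros Hp n.
    destruct (Hp (fun m => m = n) (pi (S n))) as [[m [-> E]] | [a [[m [-> E]] Ha]]].
    + exists (S n); split; [right; eauto|reflexivity].
    + left; congruence.
    + right; exists a; split; congruence.
  - intros Hs N y [m [[Nm | [n [Nn <-]]] <-]].
    + left; exists m; auto.
    + destruct (Hs n) as [E | [a [-> Ha]]].
      * left; exists n; auto.
      * right; exists (pi n); split; [exists n|]; auto.
Qed.

Lemma chain_to_path pi l :
  chain (fwdC R) pi l -> is_path R (fun n => pi (Nat.min n l)).
Proof.
  intro Hc; apply is_path_steps; intro n.
  destruct (Nat.le_gt_cases l n).
  - rewrite !Nat.min_r by lia; apply fwdC_refl.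
  - rewrite !Nat.min_l by lia; now apply Hc.
Qed.

Lemma sat_rhoF_chain f g x :
  sat (RhoF f g) x <-> exists pi l, chain (fwdC R) pi l /\ pi 0 = x /\
    sat f (pi l) /\ (forall j, 0 < j -> j < l -> sat g (pi j)).
Proof.
  split.
  - intros [pi [l [Hp [H0 [Hl Hj]]]]].
    exists pi, l; repeat split; auto.
    intros n _; now apply is_path_steps.
  - intros [pi [l [Hc [H0 [Hl Hj]]]]].
    exists (fun n => pi (Nat.min n l)), l; repeat split.
    + now apply chain_to_path.
    + now rewrite Nat.min_l by lia.
    + now rewrite Nat.min_id.
    + intros j Hj0 Hjl; rewrite Nat.min_l by lia; auto.
Qed.

Lemma sat_rhoB_chain f g x :
  sat (RhoB f g) x <-> exists pi l, chain (fwdC R) pi l /\ pi l = x /\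
    sat f (pi 0) /\ (forall j, 0 < j -> j < l -> sat g (pi j)).
Proof.
  split.
  - intros [pi [l [Hp [Hl [H0 Hj]]]]].
    exists pi, l; repeat split; auto.
    intros n _; now apply is_path_steps.
  - intros [pi [l [Hc [Hl [H0 Hj]]]]].
    exists (fun n => pi (Nat.min n l)), l; repeat split.
    + now apply chain_to_path.
    + now rewrite Nat.min_id.
    + now rewrite Nat.min_l by lia.
    + intros j Hj0 Hjl; rewrite Nat.min_l by lia; auto.
Qed.

Section Soundness.
Variable B : X -> X -> Prop.
Hypothesis HB : CMC_bisim_rel R V B.

Lemma bisim_sym x y : B x y -> B y x.
Proof. destruct HB as [[_ [Hsym _]] _]; auto. Qed.

(* Forth condition along the forward closure, using the class of [y]. *)
Lemma bisim_fwd_zig x x' y :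
  B x x' -> fwdC R x y -> exists y', fwdC R x' y' /\ B y y'.
Proof.
  intros Bx Hy; destruct HB as [[Hrefl _] [_ Hcl]].
  destruct (Hcl x x' Bx) as [_ Hc].
  destruct (Hc (B y)) as [[Hfwd _] _]; [exists y; tauto|].
  apply Hfwd; eauto.
Qed.

(* The back condition along the backward closure, read as forward steps. *)
Lemma bisim_fwd_zag x x' y :
  B x x' -> fwdC R y x -> exists y', fwdC R y' x' /\ B y y'.
Proof.
  intros Bx Hy; destruct HB as [[Hrefl _] [_ Hcl]].
  destruct (Hcl x x' Bx) as [_ Hc].
  destruct (Hc (B y)) as [_ [Hbwd _]]; [exists y; tauto|].
  destruct Hbwd as [y' [Hy' By']]; [exists y; rewrite bwdC_fwdC; auto|].
  exists y'; rewrite <- bwdC_fwdC; auto.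
Qed.

Lemma bisim_preserves_sat phi : forall x y, B x y -> sat phi x -> sat phi y.
Proof.
  induction phi as [p | f IH | f IHf g IHg | f IHf g IHg | f IHf g IHg];
    intros x y Bxy Hx.
  - destruct HB as [_ [_ Hcl]]; now apply (proj1 (Hcl x y Bxy) p).
  - intro Hy; apply Hx, (IH y); [apply bisim_sym|]; assumption.
  - destruct Hx; [left; eapply IHf | right; eapply IHg]; eauto.
  - apply sat_rhoF_chain in Hx; apply sat_rhoF_chain.
    destruct Hx as [pi [l [Hc [<- [Hl Hj]]]]].
    destruct (lift_chain_from_start bisim_fwd_zig l pi y Hc Bxy)
      as [pi' [Hc' [E HBj]]].
    exists pi', l; repeat split; auto.
    + apply (IHf (pi l)); auto.
    + intros j Hj0 Hjl; apply (IHg (pi j)); auto with arith.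
  - apply sat_rhoB_chain in Hx; apply sat_rhoB_chain.
    destruct Hx as [pi [l [Hc [<- [H0 Hj]]]]].
    destruct (lift_chain_from_end bisim_fwd_zag l pi y Hc Bxy)
      as [pi' [Hc' [E HBj]]].
    exists pi', l; repeat split; auto.
    + apply (IHf (pi 0)); auto with arith.
    + intros j Hj0 Hjl; apply (IHg (pi j)); auto with arith.
Qed.

End Soundness.

Definition And (a b : slcs AP) : slcs AP := Neg (Or (Neg a) (Neg b)).
Definition Falsum (f : slcs AP) : slcs AP := Neg (Or f (Neg f)).

Lemma sat_And a b x : sat (And a b) x <-> sat a x /\ sat b x.
Proof.
  simpl; split.
  - intro H; split; apply NNPP; tauto.
  - tauto.
Qed.

Lemma not_sat_Falsum f x : ~ sat (Falsum f) x.
Proof. simpl; tauto. Qed.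

Definition diaF (f : slcs AP) : slcs AP := RhoF f (Falsum f).
Definition diaB (f : slcs AP) : slcs AP := RhoB f (Falsum f).

Lemma sat_diaF f x : sat (diaF f) x <-> exists y, fwdC R x y /\ sat f y.
Proof.
  unfold diaF; rewrite sat_rhoF_chain; split.
  - intros [pi [l [Hc [<- [Hl Hj]]]]].
    destruct l as [|[|l]].
    + exists (pi 0); split; [apply fwdC_refl|exact Hl].
    + exists (pi 1); split; [apply Hc; lia|exact Hl].
    + exfalso; apply (not_sat_Falsum f (pi 1)), Hj; lia.
  - intros [y [Hy Hf]].
    exists (fun n => match n with 0 => x | _ => y end), 1.
    repeat split; auto; [intros n Hn; replace n with 0 by lia; exact Hy|lia].
Qed.

Lemma sat_diaB f x : sat (diaB f) x <-> exists y, bwdC R x y /\ sat f y.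
Proof.
  unfold diaB; rewrite sat_rhoB_chain; split.
  - intros [pi [l [Hc [<- [H0 Hj]]]]].
    destruct l as [|[|l]].
    + exists (pi 0); split; [apply bwdC_refl|exact H0].
    + exists (pi 0); split; [apply bwdC_fwdC, Hc; lia|exact H0].
    + exfalso; apply (not_sat_Falsum f (pi 1)), Hj; lia.
  - intros [y [Hy Hf]].
    exists (fun n => match n with 0 => y | _ => x end), 1.
    repeat split; auto; [intros n Hn; replace n with 0 by lia; now apply bwdC_fwdC|lia].
Qed.

Lemma equiv_is_equivalence : equivalence_rel equiv.
Proof.
  unfold equivalence_rel, slcs_equiv; split; [|split].
  - tauto.
  - intros x y H phi; specialize (H phi); tauto.
  - intros x y z H1 H2 phi; specialize (H1 phi); specialize (H2 phi); tauto.
Qed.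

Lemma distinguishing_formula z y :
  ~ equiv z y -> exists phi, sat phi z /\ ~ sat phi y.
Proof.
  intro H; apply not_all_ex_not in H; destruct H as [phi Hphi].
  destruct (classic (sat phi z)) as [Hz | Hz].
  - exists phi; split; [exact Hz|]; intro Hy; apply Hphi; tauto.
  - exists (Neg phi); split; [exact Hz|].
    intro Hy; apply Hy, NNPP; intro Hny; apply Hphi; tauto.
Qed.

(* A finite set of points each told apart from [z] is told apart from [z] by a
   single formula: the conjunction of the separating formulas, seeded by some
   formula [psi0] true at [z] (the formula type may otherwise be empty). *)
Lemma separating_formula (z : X) (A : X -> Prop) (psi0 : slcs AP) :
  sat psi0 z -> finite_set A ->
  (forall y, A y -> exists phi, sat phi z /\ ~ sat phi y) ->
  exists Phi, sat Phi z /\ forall y, A y -> ~ sat Phi y.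
Proof.
  intros Hpsi0 [l Hl] Hsep.
  assert (Hlist : forall l', exists Phi, sat Phi z /\
            forall y, In y l' -> A y -> ~ sat Phi y).
  { induction l' as [|a l' IH].
    - exists psi0; split; [exact Hpsi0|]; intros y [].
    - destruct IH as [Phi [HPhi Hout]].
      destruct (classic (A a)) as [Aa | nAa].
      + destruct (Hsep a Aa) as [phi [Hphi Hna]].
        exists (And Phi phi); split; [now apply sat_And|].
        intros y [<- | Hy] Ay Hs; apply sat_And in Hs;
          [apply Hna | apply (Hout y)]; tauto.
      + exists Phi; split; [exact HPhi|].
        intros y [<- | Hy] Ay; [contradiction|auto]. }
  destruct (Hlist l) as [Phi [HPhi Hout]].
  exists Phi; split; [exact HPhi|]; intros y Ay; exact (Hout y (Hl y Ay) Ay).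
Qed.

Lemma equiv_zig (Nb : X -> X -> Prop) (dia : slcs AP -> slcs AP) :
  (forall f x, sat (dia f) x <-> exists y, Nb x y /\ sat f y) ->
  (forall x, Nb x x) -> (forall x, finite_set (Nb x)) ->
  forall x1 x2 y1, equiv x1 x2 -> Nb x1 y1 -> exists y2, Nb x2 y2 /\ equiv y1 y2.
Proof.
  intros sat_dia Nb_refl Nb_fin x1 x2 y1 E12 Hy1.
  apply NNPP; intro Hno.
  assert (Hsep : forall y, Nb x2 y -> exists phi, sat phi y1 /\ ~ sat phi y).
  { intros y Hy; apply distinguishing_formula; intro E; apply Hno; eauto. }
  destruct (Hsep x2 (Nb_refl x2)) as [psi0 [Hpsi0 _]].
  destruct (separating_formula y1 (Nb x2) psi0 Hpsi0 (Nb_fin x2) Hsep) as [Phi [HPhi Hout]].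
  assert (Hx2 : sat (dia Phi) x2) by (apply E12, sat_dia; eauto).
  apply sat_dia in Hx2; destruct Hx2 as [y [Hy HPy]].
  exact (Hout y Hy HPy).
Qed.

Lemma equiv_is_bisim (x0 : X) :
  finitely_closed R -> finitely_backward_closed R -> CMC_bisim_rel R V equiv.
Proof.
  intros Hfin Hbfin.
  pose proof equiv_is_equivalence as Heq.
  split; [exact Heq|split; [exists x0, x0; apply (proj1 Heq)|]].
  intros y1 y2 Ey; split; [intro p; exact (Ey (Atom p))|].
  intros C HC; split.
  - apply (zig_reaches_same_classes Heq); auto.
    apply (equiv_zig (fwdC R) diaF sat_diaF fwdC_refl Hfin).
  - apply (zig_reaches_same_classes Heq); auto.
    apply (equiv_zig (bwdC R) diaB sat_diaB bwdC_refl Hbfin).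
Qed.

End Model.

Arguments bisim_sym {X AP R V B}.
Arguments bisim_preserves_sat {X AP R V B}.
Arguments equiv_is_bisim {X AP R V}.

Theorem theorem2 (X AP : Type) (R : X -> X -> Prop) (V : AP -> X -> Prop) :
  finitely_closed R -> finitely_backward_closed R ->
  forall x1 x2 : X, cmc_bisimilar R V x1 x2 <-> slcs_equiv R V x1 x2.
Proof.
  intros Hfin Hbfin x1 x2; split.
  - intros [B [HB Bx]] phi; split.
    + now apply (bisim_preserves_sat HB phi x1 x2).
    + now apply (bisim_preserves_sat HB phi x2 x1 (bisim_sym HB x1 x2 Bx)).
  - intro E; exists (slcs_equiv R V); split; [|exact E].
    now apply equiv_is_bisim.
Qed.
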